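(* Let $q:\mathbb{R}\to\mathbb{C}$ be a Schwartz-class function and set $r(x)=-q^*(-x)$ (the reverse-space reduction, i.e. $Q(x)=\begin{pmatrix}0&q(x)\\-q^*(-x)&0\end{pmatrix}$). Then, for the eigenvalue problem $Y_x=-i\zeta\Lambda Y+QY$ and its adjoint $K_x=i\zeta K\Lambda-KQ$: (1) If $\zeta\in\mathbb{C}_+$ is an eigenvalue with eigenfunction $Y$ and eigenvector $v_0$, then $-\zeta^*\in\mathbb{C}_+$ is also an eigenvalue, $\widehat Y(x)=\sigma_1Y^*(-x)$ is an eigenfunction for it, and its eigenvector is $-\sigma_1 v_0^*$. Consequently, if $\zeta\notin i\mathbb{R}_+$ (so that $-\zeta^*\neq\zeta$), every eigenvector of $-\zeta^*$ is a nonzero scalar multiple of $\sigma_1v_0^*$. (2) If $\zeta\in i\mathbb{R}_+$ is an eigenvalue, then its eigenvector, normalized so that its first component equals $1$, has the form $v_0=[1,e^{i\theta}]^T$ with $\theta\in\mathbb{R}$. (3) If $\bar\zeta\in\mathbb{C}_-$ is an adjoint eigenvalue with adjoint eigenfunction $K$ and adjoint eigenvector $\bar v_0$, then $-\bar\zeta^*\in\mathbb{C}_-$ is also an adjoint eigenvalue, $\widehat K(x)=K^*(-x)\sigma_1$ is an adjoint eigenfunction for it, and its adjoint eigenvector is $-\bar v_0^*\sigma_1$. Consequently, if $\bar\zeta\notin i\mathbb{R}_-$, every adjoint eigenvector of $-\bar\zeta^*$ is a nonzero scalar multiple of $\bar v_0^*\sigma_1$. (4) If $\bar\zeta\in i\mathbb{R}_-$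 is an adjoint eigenvalue, then its adjoint eigenvector, normalized so that its first component equals $1$, has the form $\bar v_0=[1,e^{i\bar\theta}]$ with $\bar\theta\in\mathbb{R}$.
   Context: Notation: $\Lambda=\mathrm{diag}(1,-1)$, $\sigma_1=\begin{pmatrix}0&1\\1&0\end{pmatrix}$, $\mathbb{C}_\pm$ are the open upper/lower half planes, $i\mathbb{R}_\pm$ the positive/negative imaginary half-axes, $^*$ denotes complex conjugation and $^T$ transpose. For complex functions $q(x),r(x)$ decaying rapidly as $|x|\to\infty$, put $Q(x)=\begin{pmatrix}0&q(x)\\ r(x)&0\end{pmatrix}$ and consider the eigenvalue problem $Y_x=-i\zeta\Lambda Y+QY$ ($Y$ a $2\times1$ column) and the adjoint problem $K_x=i\zeta K\Lambda-KQ$ ($K$ a $1\times2$ row). Definition (eigenvalue, eigenvector): $\zeta\in\mathbb{C}_+$ is an eigenvalue if there is a nonzero solution $Y$ (an eigenfunction) of $Y_x=-i\zeta\Lambda Y+QY$ and constants $a,b\in\mathbb{C}$ with $e^{i\zeta x}Y(x)\to[a,0]^T$ as $x\to-\infty$ and $e^{-i\zeta x}Y(x)\to[0,-b]^T$ as $x\to+\infty$; the column vector $v_0=[a,b]^T$ is called the eigenvector associated with $Y$. (For such $\zeta$ the solutions with this decay at $-\infty$ form a one-dimensional space, so eigenvectors of a given eigenvalue are determined up to a nonzero scalar, and $a\neq0$.) Definition (adjoint eigenvalue, adjoint eigenvector): $\bar\zeta\in\mathbb{C}_-$ is an adjoint eigenvalue if there is a nonzero row solution $K$ of $K_x=i\bar\zeta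 K\Lambda-KQ$ and constants $\bar a,\bar b$ with $e^{-i\bar\zeta x}K(x)\to[\bar a,0]$ as $x\to-\infty$ and $e^{i\bar\zeta x}K(x)\to[0,-\bar b]$ as $x\to+\infty$; the row vector $\bar v_0=[\bar a,\bar b]$ is the associated adjoint eigenvector (again determined up to a nonzero scalar, with $\bar a\ne0$). These eigenvalue problems are the $x$-parts of the Lax pair of the coupled system $iq_t+q_{xx}-2q^2r=0$, $ir_t-r_{xx}+2r^2q=0$, which under $r(x,t)=-q^*(-x,t)$ reduces to the reverse-space NLS equation $iq_t(x,t)+q_{xx}(x,t)+2q^2(x,t)q^*(-x,t)=0$; here $q$ plays the role of the initial condition $q(x,0)$. *)

From Stdlib Require Import Reals Lra.
Open Scope R_scope.

Definition Cplx : Type := (R * R)%type.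
Definition Re (z : Cplx) : R := fst z.
Definition Im (z : Cplx) : R := snd z.
Definition RtoC (a : R) : Cplx := (a, 0).
Definition C0 : Cplx := (0, 0).
Definition C1 : Cplx := (1, 0).
Definition Ci : Cplx := (0, 1).
Definition Cadd (z w : Cplx) : Cplx := (Re z + Re w, Im z + Im w).
Definition Copp (z : Cplx) : Cplx := (- Re z, - Im z).
Definition Csub (z w : Cplx) : Cplx := Cadd z (Copp w).
Definition Cmul (z w : Cplx) : Cplx :=
  (Re z * Re w - Im z * Im w, Re z * Im w + Im z * Re w).
Definition Cconj (z : Cplx) : Cplx := (Re z, - Im z).
Definition Cnorm (z : Cplx) : R := sqrt (Re z * Re z + Im z * Im z).
Definition Cexp (z : Cplx) : Cplx := (exp (Re z) * cos (Im z), exp (Re z) * sin (Im z)).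

Definition has_deriv (f f' : R -> Cplx) : Prop :=
  forall x, derivable_pt_lim (fun t => Re (f t)) x (Re (f' x)) /\
            derivable_pt_lim (fun t => Im (f t)) x (Im (f' x)).

Definition lim_pinf (f : R -> Cplx) (L : Cplx) : Prop :=
  forall eps, 0 < eps -> exists M, forall x, M < x -> Cnorm (Csub (f x) L) < eps.
Definition lim_minf (f : R -> Cplx) (L : Cplx) : Prop :=
  forall eps, 0 < eps -> exists M, forall x, x < M -> Cnorm (Csub (f x) L) < eps.

Definition Schwartz (q : R -> Cplx) : Prop :=
  exists D : nat -> R -> Cplx,
    (forall x, D O x = q x) /\
    (forall n, has_deriv (D n) (D (S n))) /\
    (forall n m, exists B, forall x, Rabs x ^ m * Cnorm (D n x) <= B).

Definition reverse_space (q : R -> Cplx) : R -> Cplx := fun x => Copp (Cconj (q (- x))).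

(* Column vectors in Cplx^2 are pairs (Y1, Y2); row vectors (K1, K2) likewise. *)
Definition C2 : Type := (Cplx * Cplx)%type.

Definition C2_nonzero (f : R -> C2) : Prop := exists x, f x <> (C0, C0).

Definition eigenfunction (q r : R -> Cplx) (zeta : Cplx) (Y : R -> C2) (v0 : C2) : Prop :=
  0 < Im zeta /\
  C2_nonzero Y /\
  has_deriv (fun x => fst (Y x))
            (fun x => Cadd (Cmul (Copp (Cmul Ci zeta)) (fst (Y x))) (Cmul (q x) (snd (Y x)))) /\
  has_deriv (fun x => snd (Y x))
            (fun x => Cadd (Cmul (Cmul Ci zeta) (snd (Y x))) (Cmul (r x) (fst (Y x)))) /\
  lim_minf (fun x => Cmul (Cexp (Cmul (Cmul Ci zeta) (RtoC x))) (fst (Y x))) (fst v0) /\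
  lim_minf (fun x => Cmul (Cexp (Cmul (Cmul Ci zeta) (RtoC x))) (snd (Y x))) C0 /\
  lim_pinf (fun x => Cmul (Cexp (Copp (Cmul (Cmul Ci zeta) (RtoC x)))) (fst (Y x))) C0 /\
  lim_pinf (fun x => Cmul (Cexp (Copp (Cmul (Cmul Ci zeta) (RtoC x)))) (snd (Y x)))
           (Copp (snd v0)).

Definition adj_eigenfunction (q r : R -> Cplx) (zb : Cplx) (K : R -> C2) (vb0 : C2) : Prop :=
  Im zb < 0 /\
  C2_nonzero K /\
  has_deriv (fun x => fst (K x))
            (fun x => Csub (Cmul (Cmul Ci zb) (fst (K x))) (Cmul (snd (K x)) (r x))) /\
  has_deriv (fun x => snd (K x))
            (fun x => Csub (Cmul (Copp (Cmul Ci zb)) (snd (K x))) (Cmul (fst (K x)) (q x))) /\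
  lim_minf (fun x => Cmul (Cexp (Copp (Cmul (Cmul Ci zb) (RtoC x)))) (fst (K x))) (fst vb0) /\
  lim_minf (fun x => Cmul (Cexp (Copp (Cmul (Cmul Ci zb) (RtoC x)))) (snd (K x))) C0 /\
  lim_pinf (fun x => Cmul (Cexp (Cmul (Cmul Ci zb) (RtoC x))) (fst (K x))) C0 /\
  lim_pinf (fun x => Cmul (Cexp (Cmul (Cmul Ci zb) (RtoC x))) (snd (K x)))
           (Copp (snd vb0)).

(* sigma_1 acting on a column (left) / row (right): swaps the components *)
Definition sigma1_swap (v : C2) : C2 := (snd v, fst v).
Definition C2conj (v : C2) : C2 := (Cconj (fst v), Cconj (snd v)).
Definition C2scale (c : Cplx) (v : C2) : C2 := (Cmul c (fst v), Cmul c (snd v)).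
Definition C2opp (v : C2) : C2 := (Copp (fst v), Copp (snd v)).

(* Everything rests on one uniqueness principle for the first-order system
   f' = a f + p g, g' = b g + t f with potentials of size O(1/(1+x^2)): if the
   weighted energy e^{2 lam x} (|f|^2 + |g|^2) tends to 0 at -oo and the
   exponents satisfy lam + Re a <= 0, lam + Re b <= 0, then (f, g) = 0.  Indeed
   that energy P satisfies P' <= C/(1+x^2) P, so e^{-C atan x} P is
   nonincreasing, nonnegative and tends to 0 at -oo.
   Consequently an eigenfunction is determined by its limit a at -oo (hence
   a <> 0), and two eigenfunctions (a, b), (a', b') of the same eigenvalue
   satisfy a' b = a b'.  The reverse-space symmetry Y(x) |-> sigma1 Y^*(-x)
   maps eigenfunctions of zeta to eigenfunctions of -zeta^*; comparing it with
   any other eigenfunction of -zeta^* gives (1), and with Y itself when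
   zeta = -zeta^* gives |a| = |b|, i.e. (2).  The adjoint problem is the same
   system with (p, t, a, b) = (-r, -q, i zb, -i zb), giving (3) and (4). *)
From Stdlib Require Import Reals Lra Psatz.
From Coquelicot Require Complex.
Open Scope R_scope.

(* [Cplx] and Coquelicot's [Complex.C] are both [R * R], with convertible
   operations, so Coquelicot's field structure applies to [Cplx] after [change]. *)
Add Field Complex_field : Complex.C_field_theory.

Ltac cplx_ring :=
  repeat match goal with
         | z : Cplx |- _ => lazymatch goal with |- context [z] => destruct z end
         | v : C2 |- _ => lazymatch goal with |- context [v] => destruct v end
         end;
  unfold sigma1_swap, C2conj, C2opp, C2scale, Csub, Cadd, Copp, Cmul, Cconj,
    Re, Im, C0, C1, Ci, RtoC;
  simpl; lazymatch goal with |- (_, _) = (_, _) => f_equal; ring | _ => ring end.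

Definition Cnorm2 (z : Cplx) : R := Re z * Re z + Im z * Im z.

Lemma Cnorm_Cmod z : Cnorm z = Complex.Cmod z.
Proof. unfold Cnorm, Complex.Cmod, Re, Im. f_equal. ring. Qed.

Lemma Cnorm_ge0 z : 0 <= Cnorm z.
Proof. apply sqrt_pos. Qed.

Lemma Cnorm_add z w : Cnorm (Cadd z w) <= Cnorm z + Cnorm w.
Proof. rewrite !Cnorm_Cmod. exact (Complex.Cmod_triangle z w). Qed.

Lemma Cnorm_mul z w : Cnorm (Cmul z w) = Cnorm z * Cnorm w.
Proof. rewrite !Cnorm_Cmod. exact (Complex.Cmod_mult z w). Qed.

Lemma Cnorm_opp z : Cnorm (Copp z) = Cnorm z.
Proof. rewrite !Cnorm_Cmod. exact (Complex.Cmod_opp z). Qed.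

Lemma Cnorm_conj z : Cnorm (Cconj z) = Cnorm z.
Proof. rewrite !Cnorm_Cmod. exact (Complex.Cmod_conj z). Qed.

Lemma Cnorm_eq0 z : Cnorm z = 0 -> z = C0.
Proof. rewrite Cnorm_Cmod. exact (Complex.Cmod_eq_0 z). Qed.

Lemma Cnorm_sqr z : Cnorm z * Cnorm z = Cnorm2 z.
Proof. apply sqrt_sqrt. unfold Cnorm2. nra. Qed.

Lemma Cnorm2_ge0 z : 0 <= Cnorm2 z.
Proof. unfold Cnorm2. nra. Qed.

Lemma Cnorm2_eq0 z : Cnorm2 z = 0 -> z = C0.
Proof. intro H. apply Cnorm_eq0. change (sqrt (Cnorm2 z) = 0). rewrite H. apply sqrt_0. Qed.

Lemma Cnorm2_gt0 z : z <> C0 -> 0 < Cnorm2 z.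
Proof.
  intro Hz. destruct (Cnorm2_ge0 z) as [|H0]; [assumption|].
  exfalso. apply Hz, Cnorm2_eq0. symmetry. exact H0.
Qed.

Lemma Cnorm2_Cexp_mul e w : Cnorm2 (Cmul (Cexp e) w) = exp (2 * Re e) * Cnorm2 w.
Proof.
  destruct e as [e1 e2], w as [w1 w2]. unfold Cnorm2, Cmul, Cexp, Re, Im; simpl.
  replace (2 * e1) with (e1 + e1) by ring. rewrite exp_plus.
  pose proof (sin2_cos2 e2) as Hsc. unfold Rsqr in Hsc.
  transitivity (exp e1 * exp e1 * (w1 * w1 + w2 * w2) * (sin e2 * sin e2 + cos e2 * cos e2));
    [ring | rewrite Hsc; ring].
Qed.

Lemma Re_conj_mul_le f p g :
  Re (Cmul (Cconj f) (Cmul p g)) <= Cnorm p * ((Cnorm2 f + Cnorm2 g) / 2).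
Proof.
  assert (Hmod : Re (Cmul (Cconj f) (Cmul p g)) <= Cnorm f * Cnorm p * Cnorm g).
  { rewrite Rmult_assoc, <- Cnorm_mul, <- (Cnorm_conj f), <- Cnorm_mul, Cnorm_Cmod.
    eapply Rle_trans; [apply Rle_abs | apply Complex.re_le_Cmod]. }
  rewrite <- !Cnorm_sqr.
  pose proof (Cnorm_ge0 f). pose proof (Cnorm_ge0 p). pose proof (Cnorm_ge0 g).
  pose proof (pow2_ge_0 (Cnorm f - Cnorm g)). nra.
Qed.

Lemma Cmul_proportional (a b a' b' : Cplx) :
  b <> C0 -> a' <> C0 -> Cmul a' a = Cmul b b' ->
  exists c, c <> C0 /\ (a', b') = C2scale c (b, a).
Proof.
  change Cplx with Complex.C in *. change Cmul with Complex.Cmult in *.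
  change C0 with (Complex.RtoC 0). intros Hb Ha' E.
  assert (Hfst : Complex.Cmult (Complex.Cdiv a' b) b = a') by (field; exact Hb).
  assert (Hsnd : Complex.Cmult (Complex.Cdiv a' b) a = b').
  { transitivity (Complex.Cdiv (Complex.Cmult b b') b); [rewrite <- E|]; field; exact Hb. }
  exists (Complex.Cdiv a' b). split.
  - intro Hc. apply Ha'. rewrite <- Hfst, Hc. apply Complex.Cmult_0_l.
  - unfold C2scale; cbn [fst snd]. change Cmul with Complex.Cmult.
    rewrite Hfst, Hsnd. reflexivity.
Qed.

Lemma unit_circle_angle (w : Cplx) : Cnorm2 w = 1 -> exists th, Cexp (0, th) = w.
Proof.
  destruct w as [u v]. unfold Cnorm2, Cexp, Re, Im; simpl. intro H.
  assert (Hu : -1 <= u <= 1) by nra.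
  assert (E : 1 - u² = v * v) by (unfold Rsqr; lra).
  destruct (Rle_dec 0 v) as [Hv|Hv].
  - exists (acos u). rewrite exp_0, !Rmult_1_l, cos_acos, sin_acos, E, sqrt_square by lra.
    reflexivity.
  - exists (- acos u). rewrite exp_0, !Rmult_1_l, cos_neg, sin_neg, cos_acos, sin_acos, E by lra.
    replace (v * v) with (- v * - v) by ring. rewrite sqrt_square by lra. f_equal; ring.
Qed.

Lemma Cnorm2_eq_phase (a b : Cplx) :
  a <> C0 -> Cnorm2 a = Cnorm2 b -> exists th, b = Cmul a (Cexp (0, th)).
Proof.
  intros Ha E. pose proof (Cnorm2_gt0 a Ha) as Hpos.
  destruct (unit_circle_angle (Complex.Cdiv b a)) as [th Hth].
  - replace (Cnorm2 (Complex.Cdiv b a)) with (Cnorm2 b / Cnorm2 a)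
      by (destruct a, b; unfold Cnorm2, Re, Im in *; simpl in *; field; lra).
    rewrite E. field. lra.
  - exists th. rewrite Hth. symmetry.
    change (Complex.Cmult a (Complex.Cdiv b a) = b). field. exact Ha.
Qed.

Lemma lim_minf_ext F G L L' :
  lim_minf F L -> (forall x, F x = G x) -> L = L' -> lim_minf G L'.
Proof.
  intros H E <- eps He. destruct (H eps He) as [M HM].
  exists M. intros x Hx. rewrite <- E. auto.
Qed.

Lemma lim_pinf_ext F G L L' :
  lim_pinf F L -> (forall x, F x = G x) -> L = L' -> lim_pinf G L'.
Proof.
  intros H E <- eps He. destruct (H eps He) as [M HM].
  exists M. intros x Hx. rewrite <- E. auto.
Qed.

Lemma Cnorm_lincomb_sub c d F G L1 L2 :
  Cnorm (Csub (Csub (Cmul c F) (Cmul d G)) (Csub (Cmul c L1) (Cmul d L2))) <=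
  Cnorm c * Cnorm (Csub F L1) + Cnorm d * Cnorm (Csub G L2).
Proof.
  replace (Csub (Csub (Cmul c F) (Cmul d G)) (Csub (Cmul c L1) (Cmul d L2)))
    with (Cadd (Cmul c (Csub F L1)) (Copp (Cmul d (Csub G L2)))) by cplx_ring.
  eapply Rle_trans; [apply Cnorm_add|]. rewrite Cnorm_opp, !Cnorm_mul. lra.
Qed.

Lemma lincomb_small c d u v eps :
  0 <= u -> 0 <= v -> u < eps / (1 + Cnorm c + Cnorm d) -> v < eps / (1 + Cnorm c + Cnorm d) ->
  Cnorm c * u + Cnorm d * v < eps.
Proof.
  pose proof (Cnorm_ge0 c). pose proof (Cnorm_ge0 d). intros Hu Hv Hu' Hv'.
  set (K := 1 + Cnorm c + Cnorm d) in *.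
  assert (HK : 0 < K) by (unfold K; lra).
  assert (Heps : eps = K * (eps / K)) by (field; lra).
  unfold K in *. nra.
Qed.

Lemma lim_minf_lincomb F G L1 L2 c d :
  lim_minf F L1 -> lim_minf G L2 ->
  lim_minf (fun x => Csub (Cmul c (F x)) (Cmul d (G x))) (Csub (Cmul c L1) (Cmul d L2)).
Proof.
  intros H1 H2 eps He.
  assert (Hp : 0 < eps / (1 + Cnorm c + Cnorm d)).
  { pose proof (Cnorm_ge0 c). pose proof (Cnorm_ge0 d). apply Rdiv_lt_0_compat; lra. }
  destruct (H1 _ Hp) as [M1 HM1], (H2 _ Hp) as [M2 HM2].
  exists (Rmin M1 M2). intros x Hx.
  pose proof (Rmin_l M1 M2). pose proof (Rmin_r M1 M2).
  eapply Rle_lt_trans; [apply Cnorm_lincomb_sub|].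
  apply lincomb_small; auto using Cnorm_ge0; [apply HM1 | apply HM2]; lra.
Qed.

Lemma lim_pinf_lincomb F G L1 L2 c d :
  lim_pinf F L1 -> lim_pinf G L2 ->
  lim_pinf (fun x => Csub (Cmul c (F x)) (Cmul d (G x))) (Csub (Cmul c L1) (Cmul d L2)).
Proof.
  intros H1 H2 eps He.
  assert (Hp : 0 < eps / (1 + Cnorm c + Cnorm d)).
  { pose proof (Cnorm_ge0 c). pose proof (Cnorm_ge0 d). apply Rdiv_lt_0_compat; lra. }
  destruct (H1 _ Hp) as [M1 HM1], (H2 _ Hp) as [M2 HM2].
  exists (Rmax M1 M2). intros x Hx.
  pose proof (Rmax_l M1 M2). pose proof (Rmax_r M1 M2).
  eapply Rle_lt_trans; [apply Cnorm_lincomb_sub|].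
  apply lincomb_small; auto using Cnorm_ge0; [apply HM1 | apply HM2]; lra.
Qed.

Lemma lim_pinf_unique F L1 L2 : lim_pinf F L1 -> lim_pinf F L2 -> L1 = L2.
Proof.
  intros H1 H2.
  assert (Hz : Cnorm (Csub L1 L2) = 0).
  { apply Rle_antisym; [|apply Cnorm_ge0]. apply Rnot_lt_le. intro Hpos.
    set (e := Cnorm (Csub L1 L2) / 2).
    assert (He : 0 < e) by (unfold e; lra).
    destruct (H1 e He) as [M1 HM1], (H2 e He) as [M2 HM2].
    set (x := Rmax M1 M2 + 1).
    pose proof (HM1 x ltac:(unfold x; pose proof (Rmax_l M1 M2); lra)).
    pose proof (HM2 x ltac:(unfold x; pose proof (Rmax_r M1 M2); lra)).
    pose proof (Cnorm_add (Copp (Csub (F x) L1)) (Csub (F x) L2)) as Htri.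
    replace (Cadd (Copp (Csub (F x) L1)) (Csub (F x) L2)) with (Csub L1 L2) in Htri
      by cplx_ring.
    rewrite Cnorm_opp in Htri. unfold e in *. lra. }
  apply Cnorm_eq0 in Hz. destruct L1, L2.
  unfold Csub, Cadd, Copp, C0, Re, Im in Hz; simpl in Hz. injection Hz.
  intros. f_equal; lra.
Qed.

Lemma lim_pinf_reflect_conj F L :
  lim_pinf F L -> lim_minf (fun x => Cconj (F (- x))) (Cconj L).
Proof.
  intros H eps He. destruct (H eps He) as [M HM]. exists (- M). intros x Hx.
  replace (Csub (Cconj (F (- x))) (Cconj L)) with (Cconj (Csub (F (- x)) L)) by cplx_ring.
  rewrite Cnorm_conj. apply HM. lra.
Qed.

Lemma lim_minf_reflect_conj F L :
  lim_minf F L -> lim_pinf (fun x => Cconj (F (- x))) (Cconj L).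
Proof.
  intros H eps He. destruct (H eps He) as [M HM]. exists (- M). intros x Hx.
  replace (Csub (Cconj (F (- x))) (Cconj L)) with (Cconj (Csub (F (- x)) L)) by cplx_ring.
  rewrite Cnorm_conj. apply HM. lra.
Qed.

Lemma lim_minf_Cexp_mul_0 (E h : R -> Cplx) lam :
  (forall x, Re (E x) = lam * x) -> lim_minf (fun x => Cmul (Cexp (E x)) (h x)) C0 ->
  forall eps, 0 < eps -> exists M, forall x, x < M -> exp (2 * lam * x) * Cnorm2 (h x) < eps.
Proof.
  intros HE H eps He. destruct (H (sqrt eps) (sqrt_lt_R0 _ He)) as [M HM].
  exists M. intros x Hx. specialize (HM x Hx).
  replace (Csub (Cmul (Cexp (E x)) (h x)) C0) with (Cmul (Cexp (E x)) (h x)) in HM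
    by cplx_ring.
  rewrite Rmult_assoc, <- HE, <- Cnorm2_Cexp_mul, <- Cnorm_sqr, <- (sqrt_sqrt eps) by lra.
  pose proof (Cnorm_ge0 (Cmul (Cexp (E x)) (h x))).
  apply Rmult_le_0_lt_compat; lra.
Qed.

Lemma derivable_pt_lim_value f x l l' :
  derivable_pt_lim f x l -> l = l' -> derivable_pt_lim f x l'.
Proof. intros H <-. exact H. Qed.

Lemma derivable_pt_lim_Cnorm2 f f' x : has_deriv f f' ->
  derivable_pt_lim (fun t => Cnorm2 (f t)) x (2 * Re (Cmul (Cconj (f x)) (f' x))).
Proof.
  intros H. destruct (H x) as [H1 H2]. unfold Cnorm2.
  eapply derivable_pt_lim_value.
  - apply derivable_pt_lim_plus; apply derivable_pt_lim_mult; eassumption.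
  - unfold Cmul, Cconj, Re, Im. simpl. ring.
Qed.

Lemma has_deriv_ext f f' f'' :
  has_deriv f f' -> (forall x, f' x = f'' x) -> has_deriv f f''.
Proof. intros H E x. rewrite <- E. apply H. Qed.

Lemma has_deriv_lincomb f g f' g' c d : has_deriv f f' -> has_deriv g g' ->
  has_deriv (fun x => Csub (Cmul c (f x)) (Cmul d (g x)))
            (fun x => Csub (Cmul c (f' x)) (Cmul d (g' x))).
Proof.
  intros Hf Hg x. destruct (Hf x) as [F1 F2], (Hg x) as [G1 G2].
  unfold Csub, Cadd, Copp, Cmul, Re, Im; simpl.
  split; apply derivable_pt_lim_plus; try apply derivable_pt_lim_opp;
    first [apply derivable_pt_lim_minus | apply derivable_pt_lim_plus];
    apply derivable_pt_lim_scal; assumption.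
Qed.

Lemma has_deriv_reflect_conj f f' : has_deriv f f' ->
  has_deriv (fun x => Cconj (f (- x))) (fun x => Copp (Cconj (f' (- x)))).
Proof.
  intros H x. destruct (H (- x)) as [H1 H2].
  assert (Hopp : derivable_pt_lim (fun t => - t) x (-1)).
  { apply derivable_pt_lim_opp, derivable_pt_lim_id. }
  unfold Copp, Cconj, Re, Im in *; simpl. split.
  - eapply derivable_pt_lim_value.
    + apply (derivable_pt_lim_comp (fun t => - t) (fun t => fst (f t))); eassumption.
    + ring.
  - apply derivable_pt_lim_opp. eapply derivable_pt_lim_value.
    + apply (derivable_pt_lim_comp (fun t => - t) (fun t => snd (f t))); eassumption.
    + ring.
Qed.

(** * A Gronwall-type vanishing principle *)

Section Gronwall.

Variables (P dP : R -> R) (C : R).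
Hypothesis P_deriv : forall x, derivable_pt_lim P x (dP x).
Hypothesis dP_le : forall x, dP x <= C / (1 + x ^ 2) * P x.

(* e^{-C atan x} is an integrating factor for the weight C / (1 + x^2). *)
Lemma integrating_factor_decreasing : decreasing (fun x => exp (- C * atan x) * P x).
Proof.
  set (W := fun x => exp (- C * atan x) * P x).
  assert (HW : forall x, derivable_pt_lim W x
                 (exp (- C * atan x) * (dP x - C / (1 + x ^ 2) * P x))).
  { intro x. eapply derivable_pt_lim_value.
    - apply (derivable_pt_lim_mult (fun t => exp (- C * atan t)) P); [|apply P_deriv].
      apply (derivable_pt_lim_comp (fun t => - C * atan t) exp).
      + apply derivable_pt_lim_scal, derivable_pt_lim_atan.
      + apply derivable_pt_lim_exp.
    - unfold Rdiv. ring. }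
  apply (nonpos_derivative_1 W (fun x => exist _ _ (HW x))). intro x.
  cbn [derive_pt proj1_sig].
  pose proof (exp_pos (- C * atan x)).
  assert (dP x - C / (1 + x ^ 2) * P x <= 0) by (pose proof (dP_le x); lra).
  nra.
Qed.

Lemma subsolution_vanishing :
  0 <= C -> (forall x, 0 <= P x) ->
  (forall eps, 0 < eps -> exists M, forall x, x < M -> P x < eps) ->
  forall x, P x = 0.
Proof.
  intros HC HP Hlim x.
  set (K := exp (C * (PI / 2))).
  assert (HK : 0 < K) by apply exp_pos.
  assert (Hfactor : forall y, exp (- C * atan y) <= K).
  { intro y. pose proof (atan_bound y).
    destruct (Req_dec C 0) as [->|HC0]; [unfold K; rewrite !Rmult_0_l, Ropp_0, Rmult_0_l; lra|].
    left. apply exp_increasing. nra. }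
  apply Rle_antisym; [|apply HP]. apply Rnot_lt_le. intro Hpos.
  set (Gx := exp (- C * atan x) * P x).
  assert (HG : 0 < Gx) by (apply Rmult_lt_0_compat; [apply exp_pos | lra]).
  destruct (Hlim (Gx / K)) as [M HM]; [apply Rdiv_lt_0_compat; lra|].
  set (y := Rmin M x - 1).
  pose proof (Rmin_l M x). pose proof (Rmin_r M x).
  pose proof (integrating_factor_decreasing y x ltac:(unfold y; lra)) as Hdec.
  pose proof (HM y ltac:(unfold y; lra)) as Hy.
  pose proof (Hfactor y). pose proof (HP y).
  assert (exp (- C * atan y) * P y <= K * P y) by (apply Rmult_le_compat_r; lra).
  assert (K * P y < Gx) by (apply (Rmult_lt_compat_l K) in Hy; [|lra];
                            replace (K * (Gx / K)) with Gx in Hy by (field; lra); lra).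
  cbv beta in Hdec. unfold Gx in *. lra.
Qed.

End Gronwall.

(** * First-order systems with decaying potentials *)

Section LinearSystem.

Variables (p t : R -> Cplx) (a b : Cplx).

Definition solves (f g : R -> Cplx) : Prop :=
  has_deriv f (fun x => Cadd (Cmul a (f x)) (Cmul (p x) (g x))) /\
  has_deriv g (fun x => Cadd (Cmul b (g x)) (Cmul (t x) (f x))).

Lemma solves_lincomb f g f2 g2 c d : solves f g -> solves f2 g2 ->
  solves (fun x => Csub (Cmul c (f x)) (Cmul d (f2 x)))
         (fun x => Csub (Cmul c (g x)) (Cmul d (g2 x))).
Proof.
  intros [Hf Hg] [Hf2 Hg2]. split.
  - eapply has_deriv_ext; [apply (has_deriv_lincomb _ _ _ _ c d Hf Hf2)|].
    intro x. cbv beta. generalize (f x) (f2 x) (g x) (g2 x) (p x). intros. cplx_ring.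
  - eapply has_deriv_ext; [apply (has_deriv_lincomb _ _ _ _ c d Hg Hg2)|].
    intro x. cbv beta. generalize (f x) (f2 x) (g x) (g2 x) (t x). intros. cplx_ring.
Qed.

Variables (lam C : R).
Hypothesis lam_a : lam + Re a <= 0.
Hypothesis lam_b : lam + Re b <= 0.
Hypothesis potential_bound : forall x, (Cnorm (p x) + Cnorm (t x)) * (1 + x ^ 2) <= C.

Lemma energy_rate_le (fx gx px tx : Cplx) :
  2 * Re (Cmul (Cconj fx) (Cadd (Cmul a fx) (Cmul px gx))) +
  2 * Re (Cmul (Cconj gx) (Cadd (Cmul b gx) (Cmul tx fx))) +
  2 * lam * (Cnorm2 fx + Cnorm2 gx)
  <= (Cnorm px + Cnorm tx) * (Cnorm2 fx + Cnorm2 gx).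
Proof.
  pose proof (Re_conj_mul_le fx px gx). pose proof (Re_conj_mul_le gx tx fx).
  replace (Re (Cmul (Cconj fx) (Cadd (Cmul a fx) (Cmul px gx))))
    with (Re a * Cnorm2 fx + Re (Cmul (Cconj fx) (Cmul px gx)))
    by (unfold Cnorm2; cplx_ring).
  replace (Re (Cmul (Cconj gx) (Cadd (Cmul b gx) (Cmul tx fx))))
    with (Re b * Cnorm2 gx + Re (Cmul (Cconj gx) (Cmul tx fx)))
    by (unfold Cnorm2; cplx_ring).
  pose proof (Cnorm2_ge0 fx). pose proof (Cnorm2_ge0 gx).
  assert ((lam + Re a) * Cnorm2 fx <= 0) by nra.
  assert ((lam + Re b) * Cnorm2 gx <= 0) by nra.
  nra.
Qed.

Lemma potential_le x : Cnorm (p x) + Cnorm (t x) <= C / (1 + x ^ 2).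
Proof.
  assert (0 < 1 + x ^ 2) by (pose proof (pow2_ge_0 x); lra).
  apply (Rmult_le_reg_r (1 + x ^ 2)); [lra|].
  unfold Rdiv. rewrite Rmult_assoc, Rinv_l by lra. rewrite Rmult_1_r. apply potential_bound.
Qed.

Lemma derivable_pt_lim_weighted_energy f g x : solves f g ->
  derivable_pt_lim (fun y => exp (2 * lam * y) * (Cnorm2 (f y) + Cnorm2 (g y))) x
    (exp (2 * lam * x) *
     (2 * lam * (Cnorm2 (f x) + Cnorm2 (g x)) +
      (2 * Re (Cmul (Cconj (f x)) (Cadd (Cmul a (f x)) (Cmul (p x) (g x)))) +
       2 * Re (Cmul (Cconj (g x)) (Cadd (Cmul b (g x)) (Cmul (t x) (f x))))))).
Proof.
  intros [Hf Hg]. eapply derivable_pt_lim_value.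
  - apply (derivable_pt_lim_mult (fun y => exp (2 * lam * y))).
    + apply (derivable_pt_lim_comp (fun y => 2 * lam * y) exp); [|apply derivable_pt_lim_exp].
      apply derivable_pt_lim_scal, derivable_pt_lim_id.
    + apply derivable_pt_lim_plus; apply derivable_pt_lim_Cnorm2; eassumption.
  - cbv beta. ring.
Qed.

Lemma solves_weighted_energy_vanishing f g : solves f g ->
  (forall eps, 0 < eps -> exists M, forall x, x < M ->
     exp (2 * lam * x) * (Cnorm2 (f x) + Cnorm2 (g x)) < eps) ->
  forall x, f x = C0 /\ g x = C0.
Proof.
  intros Hsol Hlim.
  assert (HC : 0 <= C).
  { pose proof (potential_bound 0). pose proof (Cnorm_ge0 (p 0)). pose proof (Cnorm_ge0 (t 0)).
    simpl in *. nra. }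
  assert (Hvanish : forall x, exp (2 * lam * x) * (Cnorm2 (f x) + Cnorm2 (g x)) = 0).
  { apply (subsolution_vanishing _ _ C (fun x => derivable_pt_lim_weighted_energy f g x Hsol));
      [intro x | exact HC | intro x | exact Hlim].
    - pose proof (energy_rate_le (f x) (g x) (p x) (t x)) as Hrate.
      pose proof (Cnorm2_ge0 (f x)). pose proof (Cnorm2_ge0 (g x)).
      assert (Hpot : (Cnorm (p x) + Cnorm (t x)) * (Cnorm2 (f x) + Cnorm2 (g x))
                     <= C / (1 + x ^ 2) * (Cnorm2 (f x) + Cnorm2 (g x)))
        by (apply Rmult_le_compat_r; [lra | apply potential_le]).
      replace (C / (1 + x ^ 2) * (exp (2 * lam * x) * (Cnorm2 (f x) + Cnorm2 (g x))))
        with (exp (2 * lam * x) * (C / (1 + x ^ 2) * (Cnorm2 (f x) + Cnorm2 (g x))))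
        by ring.
      apply Rmult_le_compat_l; [apply Rlt_le, exp_pos | lra].
    - pose proof (Cnorm2_ge0 (f x)). pose proof (Cnorm2_ge0 (g x)).
      pose proof (exp_pos (2 * lam * x)). nra. }
  intro x. pose proof (Hvanish x). pose proof (exp_pos (2 * lam * x)).
  pose proof (Cnorm2_ge0 (f x)). pose proof (Cnorm2_ge0 (g x)).
  split; apply Cnorm2_eq0; nra.
Qed.

Variable E : R -> Cplx.
Hypothesis Re_E : forall x, Re (E x) = lam * x.

Definition solution_with_data (f g : R -> Cplx) (A B : Cplx) : Prop :=
  solves f g /\
  lim_minf (fun x => Cmul (Cexp (E x)) (f x)) A /\
  lim_minf (fun x => Cmul (Cexp (E x)) (g x)) C0 /\
  lim_pinf (fun x => Cmul (Cexp (Copp (E x))) (g x)) B.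

Lemma solution_with_data_zero f g B :
  solution_with_data f g C0 B -> forall x, f x = C0 /\ g x = C0.
Proof.
  intros [Hsol [Hf [Hg _]]]. apply (solves_weighted_energy_vanishing f g Hsol).
  intros eps He.
  destruct (lim_minf_Cexp_mul_0 E f lam Re_E Hf (eps / 2)) as [M1 HM1]; [lra|].
  destruct (lim_minf_Cexp_mul_0 E g lam Re_E Hg (eps / 2)) as [M2 HM2]; [lra|].
  exists (Rmin M1 M2). intros x Hx.
  pose proof (Rmin_l M1 M2). pose proof (Rmin_r M1 M2).
  specialize (HM1 x ltac:(lra)). specialize (HM2 x ltac:(lra)). lra.
Qed.

Lemma solution_with_data_A_neq0 f g A B : solution_with_data f g A B ->
  (exists x, (f x, g x) <> (C0, C0)) -> A <> C0.
Proof.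
  intros Hsol [x Hx] ->. destruct (solution_with_data_zero f g B Hsol x) as [Hf Hg].
  apply Hx. rewrite Hf, Hg. reflexivity.
Qed.

(* [A2 (f, g) - A (f2, g2)] has vanishing limit at -oo, hence is zero, and so
   is its limit [A2 B - A B2] at +oo. *)
Lemma solution_with_data_cross f g f2 g2 A B A2 B2 :
  solution_with_data f g A B -> solution_with_data f2 g2 A2 B2 ->
  Cmul A2 B = Cmul A B2.
Proof.
  intros [Hsol [Hf [Hg HB]]] [Hsol2 [Hf2 [Hg2 HB2]]].
  set (h := fun x => Csub (Cmul A2 (g x)) (Cmul A (g2 x))).
  assert (Hdiff : solution_with_data (fun x => Csub (Cmul A2 (f x)) (Cmul A (f2 x))) h
                    C0 (Csub (Cmul A2 B) (Cmul A B2))).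
  { split; [|split; [|split]].
    - apply solves_lincomb; assumption.
    - eapply lim_minf_ext; [apply (lim_minf_lincomb _ _ _ _ A2 A Hf Hf2)| |];
        [intro x; cplx_ring | cplx_ring].
    - eapply lim_minf_ext; [apply (lim_minf_lincomb _ _ _ _ A2 A Hg Hg2)| |];
        [intro x; unfold h; cplx_ring | cplx_ring].
    - eapply lim_pinf_ext; [apply (lim_pinf_lincomb _ _ _ _ A2 A HB HB2)| |];
        [intro x; unfold h; cplx_ring | reflexivity]. }
  assert (Hzero : lim_pinf (fun x => Cmul (Cexp (Copp (E x))) (h x)) C0).
  { intros eps He. exists 0. intros x _.
    destruct (solution_with_data_zero _ _ _ Hdiff x) as [_ ->].
    replace (Csub (Cmul (Cexp (Copp (E x))) C0) C0) with C0 by cplx_ring.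
    unfold Cnorm, C0, Re, Im. simpl. rewrite Rmult_0_l, Rplus_0_l, sqrt_0. exact He. }
  destruct Hdiff as [_ [_ [_ HBdiff]]].
  pose proof (lim_pinf_unique _ _ _ HBdiff Hzero) as Hc.
  destruct A, A2, B, B2. unfold Csub, Cadd, Copp, Cmul, C0, Re, Im in *; simpl in *.
  injection Hc. intros. f_equal; lra.
Qed.

End LinearSystem.

(** * The eigenvalue problems for the reverse-space potential *)

Lemma Schwartz_potential_bound q : Schwartz q -> exists C, forall x,
  (Cnorm (q x) + Cnorm (reverse_space q x)) * (1 + x ^ 2) <= C.
Proof.
  intros [D [HD0 [_ HDbound]]].
  destruct (HDbound 0%nat 0%nat) as [B0 HB0], (HDbound 0%nat 2%nat) as [B2 HB2].
  assert (Hq : forall y, Cnorm (q y) * (1 + y ^ 2) <= B0 + B2).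
  { intro y. specialize (HB0 y). specialize (HB2 y). rewrite HD0 in HB0, HB2.
    rewrite pow2_abs in HB2. simpl in HB0. lra. }
  exists (2 * (B0 + B2)). intro x. unfold reverse_space. rewrite Cnorm_opp, Cnorm_conj.
  pose proof (Hq x). pose proof (Hq (- x)). replace ((- x) ^ 2) with (x ^ 2) in * by ring.
  lra.
Qed.

Lemma C2_nonzero_components (Y : R -> C2) :
  C2_nonzero Y -> exists x, (fst (Y x), snd (Y x)) <> (C0, C0).
Proof. intros [x Hx]. exists x. rewrite <- surjective_pairing. exact Hx. Qed.

Lemma eigen_exponents zeta : 0 < Im zeta ->
  - Im zeta + Re (Copp (Cmul Ci zeta)) <= 0 /\ - Im zeta + Re (Cmul Ci zeta) <= 0 /\
  forall x, Re (Cmul (Cmul Ci zeta) (RtoC x)) = - Im zeta * x.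
Proof.
  destruct zeta as [z1 z2]. unfold Copp, Cmul, Ci, RtoC, Re, Im; simpl. intro Hz.
  split; [lra | split; [lra | intro x; ring]].
Qed.

Lemma adj_eigen_exponents zb : Im zb < 0 ->
  Im zb + Re (Cmul Ci zb) <= 0 /\ Im zb + Re (Copp (Cmul Ci zb)) <= 0 /\
  forall x, Re (Copp (Cmul (Cmul Ci zb) (RtoC x))) = Im zb * x.
Proof.
  destruct zb as [z1 z2]. unfold Copp, Cmul, Ci, RtoC, Re, Im; simpl. intro Hz.
  split; [lra | split; [lra | intro x; ring]].
Qed.

Lemma Cexp_conj_mul e w : Cmul (Cexp (Cconj e)) (Cconj w) = Cconj (Cmul (Cexp e) w).
Proof.
  destruct e as [e1 e2], w as [w1 w2]. unfold Cexp, Cmul, Cconj, Re, Im; simpl.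
  rewrite cos_neg, sin_neg. f_equal; ring.
Qed.

Lemma Cexp_phase_reflect_conj zeta x w :
  Cmul (Cexp (Cmul (Cmul Ci (Copp (Cconj zeta))) (RtoC x))) (Cconj w) =
  Cconj (Cmul (Cexp (Copp (Cmul (Cmul Ci zeta) (RtoC (- x))))) w).
Proof. rewrite <- Cexp_conj_mul. do 2 f_equal. cplx_ring. Qed.

Lemma Cexp_opp_phase_reflect_conj zeta x w :
  Cmul (Cexp (Copp (Cmul (Cmul Ci (Copp (Cconj zeta))) (RtoC x)))) (Cconj w) =
  Cconj (Cmul (Cexp (Cmul (Cmul Ci zeta) (RtoC (- x)))) w).
Proof. rewrite <- Cexp_conj_mul. do 2 f_equal. cplx_ring. Qed.

Lemma C2_nonzero_reflect_conj (Y : R -> C2) :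
  C2_nonzero Y -> C2_nonzero (fun x => sigma1_swap (C2conj (Y (- x)))).
Proof.
  intros [x0 Hx0]. exists (- x0). rewrite Ropp_involutive. intro E. apply Hx0. revert E.
  destruct (Y x0) as [[a1 a2] [b1 b2]]. unfold sigma1_swap, C2conj, Cconj, C0, Re, Im; simpl.
  intro E. injection E. intros. f_equal; f_equal; lra.
Qed.

Lemma reflected_eigenvector_proportional (v0 v' : C2) :
  fst (C2opp (sigma1_swap (C2conj v0))) <> C0 -> fst v' <> C0 ->
  Cmul (fst v') (snd (C2opp (sigma1_swap (C2conj v0)))) =
    Cmul (fst (C2opp (sigma1_swap (C2conj v0)))) (snd v') ->
  exists c, c <> C0 /\ v' = C2scale c (sigma1_swap (C2conj v0)).
Proof.
  destruct v0 as [a b], v' as [a' b']. unfold C2opp, sigma1_swap, C2conj; cbn [fst snd].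
  intros Hb Ha' E.
  apply Cmul_proportional; [|exact Ha'|].
  - intro Hc. apply Hb. rewrite Hc. cplx_ring.
  - transitivity (Copp (Cmul a' (Copp (Cconj a)))); [cplx_ring|].
    rewrite E. cplx_ring.
Qed.

Lemma self_reflected_eigenvector_phase (v0 : C2) :
  fst v0 <> C0 ->
  Cmul (fst (C2opp (sigma1_swap (C2conj v0)))) (snd v0) =
    Cmul (fst v0) (snd (C2opp (sigma1_swap (C2conj v0)))) ->
  exists th, snd v0 = Cmul (fst v0) (Cexp (0, th)).
Proof.
  destruct v0 as [a b]. unfold C2opp, sigma1_swap, C2conj; cbn [fst snd].
  intros Ha E. apply Cnorm2_eq_phase; [exact Ha|].
  apply (f_equal Re) in E. revert E. destruct a, b.
  unfold Cnorm2, C2opp, Copp, Cconj, Cmul, Re, Im; simpl. lra.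
Qed.

Lemma Copp_Cconj_imaginary z : Re z = 0 -> Copp (Cconj z) = z.
Proof. destruct z as [z1 z2]. unfold Re, Im, Copp, Cconj; simpl. intro H. f_equal; lra. Qed.

Section ReverseSpace.

Variable q : R -> Cplx.

Lemma eigenfunction_reflect zeta Y v0 :
  eigenfunction q (reverse_space q) zeta Y v0 ->
  eigenfunction q (reverse_space q) (Copp (Cconj zeta))
    (fun x => sigma1_swap (C2conj (Y (- x)))) (C2opp (sigma1_swap (C2conj v0))).
Proof.
  intros [Hzeta [HY [Hf [Hg [HA [H0m [H0p HB]]]]]]].
  split; [|split; [|split; [|split; [|split; [|split; [|split]]]]]].
  - revert Hzeta. destruct zeta. unfold Copp, Cconj, Im, Re; simpl. lra.
  - exact (C2_nonzero_reflect_conj Y HY).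
  - eapply has_deriv_ext; [apply (has_deriv_reflect_conj (fun x => snd (Y x))), Hg|].
    intro x. cbv beta. unfold reverse_space. rewrite Ropp_involutive.
    generalize (q x) (Y (- x)). intros. cplx_ring.
  - eapply has_deriv_ext; [apply (has_deriv_reflect_conj (fun x => fst (Y x))), Hf|].
    intro x. cbv beta. unfold reverse_space.
    generalize (q (- x)) (Y (- x)). intros. cplx_ring.
  - eapply lim_minf_ext; [apply (lim_pinf_reflect_conj _ _ HB)| |].
    + intro x. symmetry. apply Cexp_phase_reflect_conj.
    + cplx_ring.
  - eapply lim_minf_ext; [apply (lim_pinf_reflect_conj _ _ H0p)| |].
    + intro x. symmetry. apply Cexp_phase_reflect_conj.
    + cplx_ring.
  - eapply lim_pinf_ext; [apply (lim_minf_reflect_conj _ _ H0m)| |].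
    + intro x. symmetry. apply Cexp_opp_phase_reflect_conj.
    + cplx_ring.
  - eapply lim_pinf_ext; [apply (lim_minf_reflect_conj _ _ HA)| |].
    + intro x. symmetry. apply Cexp_opp_phase_reflect_conj.
    + cplx_ring.
Qed.

Lemma adj_eigenfunction_reflect zb K vb0 :
  adj_eigenfunction q (reverse_space q) zb K vb0 ->
  adj_eigenfunction q (reverse_space q) (Copp (Cconj zb))
    (fun x => sigma1_swap (C2conj (K (- x)))) (C2opp (sigma1_swap (C2conj vb0))).
Proof.
  intros [Hzb [HK [Hf [Hg [HA [H0m [H0p HB]]]]]]].
  split; [|split; [|split; [|split; [|split; [|split; [|split]]]]]].
  - revert Hzb. destruct zb. unfold Copp, Cconj, Im, Re; simpl. lra.
  - exact (C2_nonzero_reflect_conj K HK).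
  - eapply has_deriv_ext; [apply (has_deriv_reflect_conj (fun x => snd (K x))), Hg|].
    intro x. cbv beta. unfold reverse_space.
    generalize (q (- x)) (K (- x)). intros. cplx_ring.
  - eapply has_deriv_ext; [apply (has_deriv_reflect_conj (fun x => fst (K x))), Hf|].
    intro x. cbv beta. unfold reverse_space. rewrite Ropp_involutive.
    generalize (q x) (K (- x)). intros. cplx_ring.
  - eapply lim_minf_ext; [apply (lim_pinf_reflect_conj _ _ HB)| |].
    + intro x. symmetry. apply Cexp_opp_phase_reflect_conj.
    + cplx_ring.
  - eapply lim_minf_ext; [apply (lim_pinf_reflect_conj _ _ H0p)| |].
    + intro x. symmetry. apply Cexp_opp_phase_reflect_conj.
    + cplx_ring.
  - eapply lim_pinf_ext; [apply (lim_minf_reflect_conj _ _ H0m)| |].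
    + intro x. symmetry. apply Cexp_phase_reflect_conj.
    + cplx_ring.
  - eapply lim_pinf_ext; [apply (lim_minf_reflect_conj _ _ HA)| |].
    + intro x. symmetry. apply Cexp_phase_reflect_conj.
    + cplx_ring.
Qed.

Lemma eigenfunction_data zeta Y v0 :
  eigenfunction q (reverse_space q) zeta Y v0 ->
  solution_with_data q (reverse_space q) (Copp (Cmul Ci zeta)) (Cmul Ci zeta)
    (fun x => Cmul (Cmul Ci zeta) (RtoC x))
    (fun x => fst (Y x)) (fun x => snd (Y x)) (fst v0) (Copp (snd v0)).
Proof. intros [_ [_ [Hf [Hg [HA [H0 [_ HB]]]]]]]. exact (conj (conj Hf Hg) (conj HA (conj H0 HB))). Qed.

Lemma adj_eigenfunction_data zb K vb0 :
  adj_eigenfunction q (reverse_space q) zb K vb0 ->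
  solution_with_data (fun x => Copp (reverse_space q x)) (fun x => Copp (q x))
    (Cmul Ci zb) (Copp (Cmul Ci zb)) (fun x => Copp (Cmul (Cmul Ci zb) (RtoC x)))
    (fun x => fst (K x)) (fun x => snd (K x)) (fst vb0) (Copp (snd vb0)).
Proof.
  intros [_ [_ [Hf [Hg [HA [H0 [_ HB]]]]]]].
  split; [split|split; [exact HA | split; [exact H0|]]].
  - eapply has_deriv_ext; [exact Hf|].
    intro x. cbv beta. generalize (reverse_space q x) (K x). intros. cplx_ring.
  - eapply has_deriv_ext; [exact Hg|].
    intro x. cbv beta. generalize (q x) (K x). intros. cplx_ring.
  - eapply lim_pinf_ext; [exact HB| |reflexivity].
    intro x. cbv beta. f_equal. f_equal. cplx_ring.
Qed.

Hypothesis q_Schwartz : Schwartz q.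

Lemma adj_potential_bound : exists C, forall x,
  (Cnorm (Copp (reverse_space q x)) + Cnorm (Copp (q x))) * (1 + x ^ 2) <= C.
Proof.
  destruct (Schwartz_potential_bound q q_Schwartz) as [C HC]. exists C. intro x.
  rewrite !Cnorm_opp, Rplus_comm. apply HC.
Qed.

Lemma eigenvector_fst_neq0 zeta Y v0 :
  eigenfunction q (reverse_space q) zeta Y v0 -> fst v0 <> C0.
Proof.
  intro HY. destruct (eigen_exponents zeta (proj1 HY)) as [Ha [Hb HE]].
  destruct (Schwartz_potential_bound q q_Schwartz) as [C HC].
  eapply (solution_with_data_A_neq0 _ _ _ _ _ C Ha Hb HC _ HE).
  - exact (eigenfunction_data _ _ _ HY).
  - apply C2_nonzero_components, HY.
Qed.

Lemma eigenvectors_cross zeta Y v Y' v' :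
  eigenfunction q (reverse_space q) zeta Y v ->
  eigenfunction q (reverse_space q) zeta Y' v' ->
  Cmul (fst v') (snd v) = Cmul (fst v) (snd v').
Proof.
  intros HY HY'. destruct (eigen_exponents zeta (proj1 HY)) as [Ha [Hb HE]].
  destruct (Schwartz_potential_bound q q_Schwartz) as [C HC].
  pose proof (solution_with_data_cross _ _ _ _ _ C Ha Hb HC _ HE _ _ _ _ _ _ _ _
                (eigenfunction_data _ _ _ HY) (eigenfunction_data _ _ _ HY')) as Hc.
  transitivity (Copp (Cmul (fst v') (Copp (snd v)))); [cplx_ring|].
  rewrite Hc. cplx_ring.
Qed.

Lemma adj_eigenvector_fst_neq0 zb K vb0 :
  adj_eigenfunction q (reverse_space q) zb K vb0 -> fst vb0 <> C0.
Proof.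
  intro HK. destruct (adj_eigen_exponents zb (proj1 HK)) as [Ha [Hb HE]].
  destruct adj_potential_bound as [C HC].
  eapply (solution_with_data_A_neq0 _ _ _ _ _ C Ha Hb HC _ HE).
  - exact (adj_eigenfunction_data _ _ _ HK).
  - apply C2_nonzero_components, HK.
Qed.

Lemma adj_eigenvectors_cross zb K vb K' vb' :
  adj_eigenfunction q (reverse_space q) zb K vb ->
  adj_eigenfunction q (reverse_space q) zb K' vb' ->
  Cmul (fst vb') (snd vb) = Cmul (fst vb) (snd vb').
Proof.
  intros HK HK'. destruct (adj_eigen_exponents zb (proj1 HK)) as [Ha [Hb HE]].
  destruct adj_potential_bound as [C HC].
  pose proof (solution_with_data_cross _ _ _ _ _ C Ha Hb HC _ HE _ _ _ _ _ _ _ _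
                (adj_eigenfunction_data _ _ _ HK) (adj_eigenfunction_data _ _ _ HK')) as Hc.
  transitivity (Copp (Cmul (fst vb') (Copp (snd vb)))); [cplx_ring|].
  rewrite Hc. cplx_ring.
Qed.

End ReverseSpace.

Theorem theorem1 (q : R -> Cplx) (hq : Schwartz q) :
  let r := reverse_space q in
  (* (1) *)
  (forall (zeta : Cplx) (Y : R -> C2) (v0 : C2),
     eigenfunction q r zeta Y v0 ->
     eigenfunction q r (Copp (Cconj zeta))
       (fun x => sigma1_swap (C2conj (Y (- x))))
       (C2opp (sigma1_swap (C2conj v0))) /\
     (Re zeta <> 0 ->
      forall (Y' : R -> C2) (v' : C2),
        eigenfunction q r (Copp (Cconj zeta)) Y' v' ->
        exists c : Cplx, c <> C0 /\ v' = C2scale c (sigma1_swap (C2conj v0)))) /\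
  (* (2) *)
  (forall (zeta : Cplx) (Y : R -> C2) (v0 : C2),
     Re zeta = 0 -> eigenfunction q r zeta Y v0 ->
     fst v0 <> C0 /\
     exists theta : R, snd v0 = Cmul (fst v0) (Cexp (0, theta))) /\
  (* (3) *)
  (forall (zb : Cplx) (K : R -> C2) (vb0 : C2),
     adj_eigenfunction q r zb K vb0 ->
     adj_eigenfunction q r (Copp (Cconj zb))
       (fun x => sigma1_swap (C2conj (K (- x))))
       (C2opp (sigma1_swap (C2conj vb0))) /\
     (Re zb <> 0 ->
      forall (K' : R -> C2) (vb' : C2),
        adj_eigenfunction q r (Copp (Cconj zb)) K' vb' ->
        exists c : Cplx, c <> C0 /\ vb' = C2scale c (sigma1_swap (C2conj vb0)))) /\
  (* (4) *)
  (forall (zb : Cplx) (K : R -> C2) (vb0 : C2),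
     Re zb = 0 -> adj_eigenfunction q r zb K vb0 ->
     fst vb0 <> C0 /\
     exists theta : R, snd vb0 = Cmul (fst vb0) (Cexp (0, theta))).
Proof.
  cbv zeta. split; [|split; [|split]].
  - intros zeta Y v0 HY. pose proof (eigenfunction_reflect q _ _ _ HY) as HYr.
    (* uniqueness of eigenvectors does not need -zeta^* <> zeta *)
    split; [exact HYr | intros _ Y' v' HY'].
    apply reflected_eigenvector_proportional.
    + exact (eigenvector_fst_neq0 q hq _ _ _ HYr).
    + exact (eigenvector_fst_neq0 q hq _ _ _ HY').
    + exact (eigenvectors_cross q hq _ _ _ _ _ HYr HY').
  - intros zeta Y v0 Hre HY. pose proof (eigenfunction_reflect q _ _ _ HY) as HYr.
    rewrite (Copp_Cconj_imaginary _ Hre) in HYr.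
    pose proof (eigenvector_fst_neq0 q hq _ _ _ HY) as Ha.
    split; [exact Ha|]. apply self_reflected_eigenvector_phase; [exact Ha|].
    exact (eigenvectors_cross q hq _ _ _ _ _ HY HYr).
  - intros zb K vb0 HK. pose proof (adj_eigenfunction_reflect q _ _ _ HK) as HKr.
    split; [exact HKr | intros _ K' vb' HK'].
    apply reflected_eigenvector_proportional.
    + exact (adj_eigenvector_fst_neq0 q hq _ _ _ HKr).
    + exact (adj_eigenvector_fst_neq0 q hq _ _ _ HK').
    + exact (adj_eigenvectors_cross q hq _ _ _ _ _ HKr HK').
  - intros zb K vb0 Hre HK. pose proof (adj_eigenfunction_reflect q _ _ _ HK) as HKr.
    rewrite (Copp_Cconj_imaginary _ Hre) in HKr.
    pose proof (adj_eigenvector_fst_neq0 q hq _ _ _ HK) as Ha.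
    split; [exact Ha|]. apply self_reflected_eigenvector_phase; [exact Ha|].
    exact (adj_eigenvectors_cross q hq _ _ _ _ _ HK HKr).
Qed.
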